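(* Let $P(t)=\binom{r+t}{r}-\binom{r+t-d}{r}$, let $x\in\mathrm{Hilb}^P(\mathbb{P}^r_k)$ be a closed point, $D\ge0$ an integer and $\gamma=(c_0,\dots,c_r)\in\Gamma(T)$ nonzero. Then $$\min_{m\in\Xi_{x,d+D}}\langle \gamma,m\rangle=|M_D|\cdot\min_{m\in\Xi_{x,d}}\langle\gamma,m\rangle,$$ and consequently $|\Delta_{x,d+D}|=|M_D|\cdot|\Delta_{x,d}|$.
   Context: Let $k$ be an algebraically closed field, $S=k[x_0,\dots,x_r]$, $S_t$ its degree-$t$ part, $M_t$ the set of monomials of degree $t$. With $P(t)=\binom{r+t}{r}-\binom{r+t-d}{r}$, a closed point $x$ of $\mathrm{Hilb}^P(\mathbb{P}^r_k)$ is a hypersurface $V(f)$, $0\ne f\in S_d$. For $t\ge d$ let $Q(t)=|M_{t-d}|$ and $\phi_t(x)=[\bigwedge^{Q(t)}(f\cdot S_{t-d})]\in\mathbb{P}(\bigwedge^{Q(t)}S_t)$. The vector space $\bigwedge^{Q(t)}S_t$ has basis the wedges $m_1\wedge\cdots\wedge m_{Q(t)}$ of distinct monomials $m_i\in M_t$; group them by the product monomial $m=\prod m_i\in M_{tQ(t)}$, write $\phi_t(x)=[\sum_{m}\phi_t(x)_m]$ with $\phi_t(x)_m$ in the span of wedges with product $m$, and define the state $\Xi_{x,t}=\{m\in M_{tQ(t)}:\phi_t(x)_m\ne0\}$ (for $t=d$ this is the set of monomials occurring in $f$ with nonzero coefficient). Monomials are identified with their exponent vectors in $\mathbb{Z}^{r+1}\subset\mathbb{R}^{r+1}$,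 and $\langle\cdot,\cdot\rangle$ is the standard inner product. $T$ is the diagonal maximal torus of $\mathrm{SL}_{r+1}(k)$; $\gamma=(c_0,\dots,c_r)\in\Gamma(T)\cong\{c\in\mathbb{Z}^{r+1}:\sum c_i=0\}$ denotes $s\mapsto\mathrm{diag}(s^{c_0},\dots,s^{c_r})$, with Euclidean norm $\Vert\gamma\Vert$. Define $|\Delta_{x,t}|=\max_{0\ne\lambda\in\Gamma(T)}\min_{m\in\Xi_{x,t}}\langle\lambda,m\rangle/\Vert\lambda\Vert$ (equivalently the distance from the point $\frac{tQ(t)}{r+1}(1,\dots,1)$ to the convex hull $\Delta_{x,t}$ of $\Xi_{x,t}$, when that point lies outside). *)

From HB Require Import structures.
From mathcomp Require Import all_boot all_order all_algebra.
Set Implicit Arguments. Unset Strict Implicit. Unset Printing Implicit Defensive.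
Import Order.TTheory GRing.Theory Num.Theory.
Local Open Scope ring_scope.

(* Exponent vectors of monomials in k[x_0,...,x_r]. *)
Definition expo (r : nat) := {ffun 'I_r.+1 -> nat}.

Definition expo_deg (r : nat) (e : expo r) : nat := (\sum_(i < r.+1) e i)%N.

(* M_t : the monomials of degree t, as an explicit duplicate-free list. *)
Definition mons (r t : nat) : seq (expo r) :=
  [seq [ffun i => nat_of_ord (g i)] | g : {ffun 'I_r.+1 -> 'I_t.+1} <- enum {ffun 'I_r.+1 -> 'I_t.+1} &
     (\sum_(i < r.+1) nat_of_ord (g i) == t)%N].

(* Homogeneous form f of degree d, nonzero, given by its coefficients. *)
Definition homog_nonzero (k : fieldType) (r d : nat) (f : expo r -> k) : Prop :=
  (forall e, f e != 0 -> expo_deg e = d) /\ (exists e, f e != 0).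

(* Coefficient of the monomial u in the product f * m. *)
Definition coefMul (k : fieldType) (r : nat) (f : expo r -> k) (m u : expo r) : k :=
  if [forall i, m i <= u i]%N then f [ffun i => (u i - m i)%N] else 0.

Definition prodExp (r Q : nat) (ms : 'I_Q -> expo r) : expo r :=
  [ffun i => (\sum_(j < Q) ms j i)%N].

Definition expo0 (r : nat) : expo r := [ffun => 0%N].

(* The Pluecker coordinate of phi_t(x) at the wedge m_{s 0} /\ ... /\ m_{s (Q-1)}
   (m_a = a-th monomial of M_t): the Q x Q minor of the matrix expressing the
   basis f*n_i (n_i the i-th monomial of M_{t-d}) in the monomial basis of S_t. *)
Definition plucker (k : fieldType) (r d t : nat) (f : expo r -> k)
    (s : {ffun 'I_(size (mons r (t - d))) -> 'I_(size (mons r t))}) : k :=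
  \det (\matrix_(i, j) coefMul f (nth (expo0 r) (mons r (t - d)) i)
                                  (nth (expo0 r) (mons r t) (s j))).

(* The state Xi_{x,t}: product monomials m with phi_t(x)_m <> 0, i.e. for which
   some wedge of distinct monomials with product m has nonzero coordinate. *)
Definition Xi (k : fieldType) (r d t : nat) (f : expo r -> k) : seq (expo r) :=
  undup [seq prodExp (fun j => nth (expo0 r) (mons r t) (s j)) |
          s : {ffun 'I_(size (mons r (t - d))) -> 'I_(size (mons r t))} <-
            enum {ffun 'I_(size (mons r (t - d))) -> 'I_(size (mons r t))}
          & injectiveb s && (plucker f s != 0)].

Arguments Xi {k} r d t f.

(* One-parameter subgroups of the diagonal torus of SL_{r+1}. *)
Definition in_Gamma (r : nat) (g : {ffun 'I_r.+1 -> int}) : bool :=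
  (\sum_(i < r.+1) g i == 0) && (g != [ffun => 0]).

Definition pairing (r : nat) (g : {ffun 'I_r.+1 -> int}) (m : expo r) : int :=
  \sum_(i < r.+1) g i * (m i)%:Z.

(* min_{m in s} <g, m>  (s is nonempty in all uses; 0 by convention otherwise). *)
Definition minPair (r : nat) (g : {ffun 'I_r.+1 -> int}) (s : seq (expo r)) : int :=
  match s with
  | [::] => 0
  | m :: s' => \big[Order.min/pairing g m]_(m' <- s') pairing g m'
  end.

Definition gnorm (R : rcfType) (r : nat) (g : {ffun 'I_r.+1 -> int}) : R :=
  Num.sqrt (\sum_(i < r.+1) ((g i) ^+ 2)%:~R).

(* v = |Delta_{x,t}| = max_{0 <> l in Gamma(T)} min_{m in Xi} <l,m>/||l||
   (the maximum is attained and equals v). *)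
Definition isDelta (R : rcfType) (k : fieldType) (r d t : nat) (f : expo r -> k)
    (v : R) : Prop :=
  (exists2 l, in_Gamma l & (minPair l (Xi r d t f))%:~R / gnorm R l = v) /\
  (forall l, in_Gamma l -> (minPair l (Xi r d t f))%:~R / gnorm R l <= v).

Arguments isDelta {R k} r d t f v.

From Pilot Require Import Defs.
From HB Require Import structures.
From mathcomp Require Import all_boot all_order all_algebra perm.
From mathcomp Require Import zify ring.

(* Write n_1, ..., n_Q for the monomials of degree t - d.  The Pluecker
   coordinates of phi_t(x) are the maximal minors of the matrix of the f * n_i
   in the monomial basis of S_t.  A nonzero minor has a nonzero term in its
   permutation expansion, which matches each n_i with a column monomial n_i * e_i,
   e_i in the support of f; hence every m in Xi_{x,t} satisfies
   <g, m> >= sum_i <g, n_i> + Q * min_e <g, e> = Q * min_e <g, e>, the sum over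
   M_{t-d} vanishing because M_{t-d} is symmetric in the variables and the
   entries of g sum to zero.  Conversely, let e0 be the least monomial of the
   support of f for a monomial order refining the g-weight.  The minor on the
   columns n_j * e0 is triangular with diagonal f(e0), so this wedge lies in
   Xi_{x,t} and attains the bound.  Hence min over Xi_{x,t} = Q * <g, e0>, and
   |Delta| scales by the same positive factor. *)
Import Order.TTheory GRing.Theory Num.Theory.
Local Open Scope ring_scope.

Local Notation weight r := {ffun 'I_r.+1 -> int}.

Section Monomials.
Context {r : nat}.
Implicit Types (e m n : expo r) (g h : weight r).

Lemma mem_mons t e : (e \in mons r t) = (expo_deg e == t).
Proof.
apply/mapP/eqP => [[h] | deg_e].
  rewrite mem_filter => /andP[/eqP sum_h _] ->; rewrite -[RHS]sum_h.
  by apply: eq_bigr => i _; rewrite ffunE.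
have lt_deg i : (e i < t.+1)%N by rewrite ltnS -deg_e /expo_deg (bigD1 i) //= leq_addr.
exists [ffun i => Ordinal (lt_deg i)]; last by apply/ffunP => i; rewrite !ffunE.
rewrite mem_filter mem_enum andbT -[X in _ == X]deg_e; apply/eqP.
by apply: eq_bigr => i _; rewrite ffunE.
Qed.

Lemma uniq_mons t : uniq (mons r t).
Proof.
rewrite map_inj_uniq; first exact/filter_uniq/enum_uniq.
move=> h1 h2 /ffunP eq_h.
by apply/ffunP => i; apply: val_inj; have := eq_h i; rewrite !ffunE.
Qed.

Lemma size_mons0 : size (mons r 0) = 1%N.
Proof.
suff /perm_size -> : perm_eq (mons r 0) [:: expo0 r] by [].
apply: uniq_perm; rewrite ?uniq_mons // => e; rewrite inE mem_mons.
apply/eqP/eqP => [deg0 | ->]; last by rewrite /expo_deg big1 // => i _; rewrite ffunE.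
apply/ffunP => i; rewrite ffunE; apply/eqP.
by rewrite -leqn0 -deg0 /expo_deg (bigD1 i) //= leq_addr.
Qed.

Lemma size_mons_gt0 t : (0 < size (mons r t))%N.
Proof.
have : [ffun i : 'I_r.+1 => if i == ord0 then t else 0%N] \in mons r t.
  rewrite mem_mons /expo_deg (bigD1 ord0) //= big1 => [|i /negbTE ni].
    by rewrite ffunE eqxx addn0.
  by rewrite ffunE ni.
by case: (mons r t).
Qed.

Definition expo_add e n : expo r := [ffun i => (e i + n i)%N].

Lemma expo_deg_add e n : expo_deg (expo_add e n) = (expo_deg e + expo_deg n)%N.
Proof. by rewrite /expo_deg -big_split; apply: eq_bigr => i _; rewrite ffunE. Qed.

Lemma expo_addIr e : injective (expo_add^~ e).
Proof.
by move=> n1 n2 /ffunP eq_n; apply/ffunP => i; have := eq_n i; rewrite !ffunE => /addIn.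
Qed.

Lemma pairing_add g e n : pairing g (expo_add e n) = pairing g e + pairing g n.
Proof. by rewrite /pairing -big_split; apply: eq_bigr => i _; rewrite ffunE PoszD mulrDr. Qed.

Lemma pairing_prodExp Q g (ms : 'I_Q -> expo r) :
  pairing g (prodExp ms) = \sum_(j < Q) pairing g (ms j).
Proof.
rewrite /pairing exchange_big; apply: eq_bigr => i _.
by rewrite ffunE -mulr_sumr (big_morph Posz PoszD (erefl 0%:Z)).
Qed.

Definition coord_weight (x : 'I_r.+1) : weight r := [ffun y => ((y == x) : nat)%:Z].

Lemma pairing_coord x e : pairing (coord_weight x) e = (e x)%:Z.
Proof.
rewrite /pairing (bigD1 x) //= big1 => [|y /negbTE ne]; last by rewrite ffunE ne mul0r.
by rewrite ffunE eqxx mul1r addr0.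
Qed.

(* Swapping two variables permutes M_t, so every variable has the same total
   exponent over M_t. *)
Lemma sum_mons_coord t (x y : 'I_r.+1) :
  \sum_(n <- mons r t) (n x)%:Z = \sum_(n <- mons r t) (n y)%:Z.
Proof.
pose sw n : expo r := [ffun z => n (tperm x y z)].
have swK : involutive sw by move=> n; apply/ffunP => z; rewrite !ffunE tpermK.
have deg_sw n : expo_deg (sw n) = expo_deg n.
  rewrite /expo_deg (reindex_inj (@perm_inj _ (tperm x y))) /=.
  by apply: eq_bigr => z _; rewrite ffunE tpermK.
have perm_sw : perm_eq (map sw (mons r t)) (mons r t).
  apply: uniq_perm; rewrite ?uniq_mons ?(map_inj_uniq (inv_inj swK)) ?uniq_mons //.
  move=> n; apply/mapP/idP => [[m] | n_t]; first by rewrite !mem_mons => deg_m ->; rewrite deg_sw.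
  by exists (sw n); rewrite ?swK // mem_mons deg_sw -mem_mons.
by rewrite -(perm_big _ perm_sw) big_map; apply: eq_bigr => n _; rewrite ffunE tpermL.
Qed.

Lemma sum_pairing_mons t g : \sum_i g i = 0 -> \sum_(n <- mons r t) pairing g n = 0.
Proof.
move=> g0; rewrite /pairing exchange_big /=.
under eq_bigr => i _ do rewrite -mulr_sumr (sum_mons_coord t i ord0).
by rewrite -mulr_suml g0 mul0r.
Qed.

Lemma coefMul_add (k : fieldType) (f : expo r -> k) n e : coefMul f n (expo_add n e) = f e.
Proof.
rewrite /coefMul (_ : [forall i, _] = true); last by apply/forallP => i; rewrite ffunE leq_addr.
by congr f; apply/ffunP => i; rewrite !ffunE addKn.
Qed.

Lemma coefMul_neq0 (k : fieldType) (f : expo r -> k) n u :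
  coefMul f n u != 0 -> exists2 e, f e != 0 & u = expo_add n e.
Proof.
rewrite /coefMul; case: ifPn => [/forallP le_nu fe | _]; last by rewrite eqxx.
by exists [ffun i => (u i - n i)%N] => //; apply/ffunP => i; rewrite !ffunE subnKC.
Qed.

Lemma minPair_le g s m : m \in s -> minPair g s <= pairing g m.
Proof.
case: s => // m0 s; rewrite inE /= => /predU1P[-> | ms]; first exact: bigmin_le_id.
exact: ge_bigmin_seq.
Qed.

Lemma minPair_eq g s w m0 :
  m0 \in s -> pairing g m0 = w -> (forall m, m \in s -> w <= pairing g m) ->
  minPair g s = w.
Proof.
move=> m0s <- low; apply: le_anti; rewrite minPair_le //=.
case: s m0s low => // m s _ low /=.
rewrite big_seq; apply: le_bigmin => [|m' m's]; apply: low; first exact: mem_head.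
by rewrite inE m's orbT.
Qed.

End Monomials.

Section LexNonneg.
Context {T : eqType} {Hs : seq T}.

Fixpoint lex_nonneg (s : seq int) : bool :=
  if s is x :: s' then (0 < x) || ((x == 0) && lex_nonneg s') else true.

Lemma lex_nonneg_head x s : lex_nonneg (x :: s) -> 0 <= x.
Proof. by move=> /= /orP[/ltW | /andP[/eqP-> _]]. Qed.

Lemma lex_nonneg0 : lex_nonneg [seq 0 | _ <- Hs].
Proof. by elim: Hs => //= h Hs' ->; rewrite eqxx orbT. Qed.

Lemma lex_nonnegD (F G : T -> int) :
  lex_nonneg (map F Hs) -> lex_nonneg (map G Hs) -> lex_nonneg [seq F h + G h | h <- Hs].
Proof.
elim: Hs => //= h Hs' IH /orP[F_gt0 | /andP[/eqP F0 F_lex]] /orP[G_gt0 | /andP[/eqP G0 G_lex]].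
- by rewrite addr_gt0.
- by rewrite G0 addr0 F_gt0.
- by rewrite F0 add0r G_gt0.
- by rewrite F0 G0 addr0 eqxx IH ?orbT.
Qed.

Lemma lex_nonneg_total (F : T -> int) :
  lex_nonneg (map F Hs) || lex_nonneg [seq - F h | h <- Hs].
Proof.
elim: Hs => //= h Hs' IH.
by case: (ltrgtP (F h) 0) => [F_lt0 | F_gt0 | ->];
  rewrite ?oppr_gt0 ?F_lt0 ?F_gt0 ?orbT ?oppr0 ?eqxx.
Qed.

(* The leading coordinates are nonnegative with zero sum, so they vanish, and
   one recurses on the remaining coordinates. *)
Lemma lex_nonneg_sum_eq0 {I : finType} {F : T -> I -> int} :
  (forall i, lex_nonneg [seq F h i | h <- Hs]) ->
  (forall h, h \in Hs -> \sum_i F h i = 0) ->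
  forall h i, h \in Hs -> F h i = 0.
Proof.
elim: Hs => // h0 Hs' IH F_lex F_sum.
have F0 i : F h0 i = 0.
  have F_ge0 j : 0 <= F h0 j by exact: lex_nonneg_head (F_lex j).
  apply/eqP; rewrite eq_le F_ge0 andbT -(F_sum h0 (mem_head _ _)).
  by rewrite (bigD1 i) //= lerDl sumr_ge0.
move=> h i; rewrite inE => /predU1P[-> // | h_in].
apply: IH h_in => [j | h' h'_in]; last by apply: F_sum; rewrite inE h'_in orbT.
by have := F_lex j; rewrite /= F0 ltxx eqxx.
Qed.

End LexNonneg.

Section MonomialLex.
Context {r : nat} (g : weight r).
Implicit Types (a b c e : expo r).

(* A monomial order refining the g-weight; the coordinate weights make it total
   on monomials. *)
Definition lex_keys : seq (weight r) := g :: [seq coord_weight x | x <- enum 'I_r.+1].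

Definition lex_le a b := lex_nonneg [seq pairing h b - pairing h a | h <- lex_keys].

Lemma lex_le_refl a : lex_le a a.
Proof. by rewrite /lex_le (eq_map (g := fun _ => 0)) ?lex_nonneg0 // => h; rewrite subrr. Qed.

Lemma lex_le_trans a b c : lex_le a b -> lex_le b c -> lex_le a c.
Proof.
move=> ab bc; have := lex_nonnegD _ _ ab bc.
by rewrite /lex_le (eq_map (g := fun h => pairing h c - pairing h a)) // => h; ring.
Qed.

Lemma lex_le_total a b : lex_le a b || lex_le b a.
Proof.
have := @lex_nonneg_total _ lex_keys (fun h => pairing h b - pairing h a).
rewrite /lex_le (eq_map (f := fun h => - (pairing h b - pairing h a))
                         (g := fun h => pairing h a - pairing h b)) //.
by move=> h; rewrite opprB.
Qed.

Lemma lex_le_pairing a b : lex_le a b -> pairing g a <= pairing g b.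
Proof. by move/lex_nonneg_head; rewrite subr_ge0. Qed.

Lemma exists_lex_min (s : seq (expo r)) :
  s != [::] -> exists2 e0, e0 \in s & forall e, e \in s -> lex_le e0 e.
Proof.
elim: s => // a s IH _; have [-> | /IH[e1 e1_in e1_min]] := eqVneq s [::].
  by exists a => [|e]; rewrite ?mem_head // inE => /eqP->; apply: lex_le_refl.
have [a_e1 | e1_a] := orP (lex_le_total a e1).
  exists a => [|e]; first exact: mem_head.
  by rewrite inE => /predU1P[-> | /e1_min]; [apply: lex_le_refl | apply: lex_le_trans].
exists e1 => [|e]; first by rewrite inE e1_in orbT.
by rewrite inE => /predU1P[-> | /e1_min].
Qed.

End MonomialLex.

Lemma det_neq0_perm (R : idomainType) n (A : 'M[R]_n) :
  \det A != 0 -> exists s : 'S_n, forall i, A i (s i) != 0.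
Proof.
case: (pickP (fun s : 'S_n => \prod_i A i (s i) != 0)) => [s /prodf_neq0 As _ | no_s].
  by exists s => i; apply: As.
rewrite /determinant big1 ?eqxx // => s _.
by have /negbFE/eqP-> := no_s s; rewrite mulr0.
Qed.

Lemma det_eq_prod_diag (R : idomainType) n (A : 'M[R]_n) :
  (forall s : 'S_n, (forall i, A i (s i) != 0) -> s = 1%g) -> \det A = \prod_i A i i.
Proof.
move=> only1; rewrite /determinant (bigD1 (1%g : 'S_n)) //= odd_perm1 expr0 mul1r.
rewrite [X in _ + X]big1 ?addr0.
  by apply: eq_bigr => i _; rewrite perm1.
move=> s s_neq1; apply/eqP; rewrite mulf_eq0; apply/orP; right.
apply: contraR s_neq1 => /prodf_neq0 As; apply/eqP/only1 => i; exact: As.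
Qed.

Section State.
Context {k : fieldType} {r d : nat} {f : expo r -> k}.
Implicit Types (g : weight r) (e m : expo r).

Local Notation mon t i := (nth (expo0 r) (mons r t) i).
Local Notation wedge t := {ffun 'I_(size (mons r (t - d))) -> 'I_(size (mons r t))}.

(* If e0 is lex-least in the support of f, then in the matrix of coefficients of
   the f * n_i on the monomials e0 * n_j only the identity permutation has a
   nonzero product: each factor of another permutation would raise the
   lexicographic key, yet these raises sum to zero. *)
Lemma shifted_wedge_perm1 {g e0 Q} {n : 'I_Q -> expo r} {s : 'S_Q} :
  injective n -> (forall e, f e != 0 -> lex_le g e0 e) ->
  (forall i, coefMul f (n i) (expo_add (n (s i)) e0) != 0) -> s = 1%g.
Proof.
move=> n_inj e0_least s_neq0.
pose F h i := pairing h (n (s i)) - pairing h (n i).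
have F_lex i : lex_nonneg [seq F h i | h <- lex_keys g].
  case/coefMul_neq0: (s_neq0 i) => e fe e_eq.
  have := e0_least e fe; congr (lex_nonneg _); apply: eq_map => h.
  by have := congr1 (pairing h) e_eq; rewrite !pairing_add /F => ?; lia.
have F_sum h : h \in lex_keys g -> \sum_i F h i = 0.
  by rewrite sumrB [X in _ - X](reindex_inj (@perm_inj _ s)) subrr.
apply/permP => i; rewrite perm1; apply: n_inj; apply/ffunP => x; apply/eqP.
rewrite -eqz_nat -!pairing_coord -subr_eq0; apply/eqP.
by apply: (lex_nonneg_sum_eq0 F_lex F_sum); rewrite inE map_f ?mem_enum ?orbT.
Qed.

Lemma XiP t m :
  m \in Xi r d t f ->
  exists2 s : wedge t, plucker f s != 0 & m = prodExp (fun j => mon t (s j)).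
Proof. by rewrite mem_undup => /mapP[s]; rewrite mem_filter => /andP[/andP[_ ?] _]; exists s. Qed.

Lemma mem_Xi t (s : wedge t) :
  injective s -> plucker f s != 0 -> prodExp (fun j => mon t (s j)) \in Xi r d t f.
Proof.
move=> s_inj plk; rewrite mem_undup; apply: map_f.
by rewrite mem_filter mem_enum plk andbT; apply/andP; split; first exact/injectiveP.
Qed.

Lemma sum_pairing_mon t g : \sum_i g i = 0 -> \sum_(i < size (mons r t)) pairing g (mon t i) = 0.
Proof. by move=> g0; rewrite -[RHS](sum_pairing_mons t g g0) (big_nth (expo0 r)) big_mkord. Qed.

Lemma Xi_pairing_ge {t g w m} :
  \sum_i g i = 0 -> (forall e, f e != 0 -> w <= pairing g e) -> m \in Xi r d t f ->
  (size (mons r (t - d)))%:Z * w <= pairing g m.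
Proof.
move=> g0 w_le /XiP[s /det_neq0_perm[p p_neq0] ->].
have step (i : 'I_(size (mons r (t - d)))) :
    pairing g (mon (t - d) i) + w <= pairing g (mon t (s (p i))).
  have := p_neq0 i; rewrite mxE => /coefMul_neq0[e fe ->].
  by rewrite pairing_add lerD2l w_le.
rewrite pairing_prodExp (reindex_inj (@perm_inj _ p)) /=.
apply: le_trans (ler_sum _ (fun i _ => step i)).
by rewrite big_split /= sum_pairing_mon // add0r sumr_const card_ord -mulr_natl natz.
Qed.

Lemma Xi_attains {t g e0} :
  \sum_i g i = 0 -> (d <= t)%N -> expo_deg e0 = d -> f e0 != 0 ->
  (forall e, f e != 0 -> lex_le g e0 e) ->
  exists2 m, m \in Xi r d t f & pairing g m = (size (mons r (t - d)))%:Z * pairing g e0.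
Proof.
move=> g0 le_dt deg_e0 fe0 e0_least.
pose u (i : 'I_(size (mons r (t - d)))) := expo_add (mon (t - d) i) e0.
have u_mon i : u i \in mons r t.
  have := mem_nth (expo0 r) (ltn_ord i).
  by rewrite !mem_mons expo_deg_add deg_e0 => /eqP->; rewrite subnK.
pose s : wedge t := [ffun i => Ordinal (etrans (index_mem (u i) _) (u_mon i))].
have mon_s i : mon t (s i) = u i by rewrite ffunE nth_index.
have mon_inj : injective (fun i : 'I_(size (mons r (t - d))) => mon (t - d) i).
  by move=> i j /eqP; rewrite nth_uniq ?uniq_mons // => /eqP/val_inj.
have s_inj : injective s.
  by move=> i j s_ij; have := mon_s i; rewrite s_ij mon_s => /expo_addIr/mon_inj->.
have plk : plucker f s != 0.
  rewrite /plucker det_eq_prod_diag => [|p p_neq0].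
    by apply/prodf_neq0 => i _; rewrite mxE mon_s coefMul_add.
  apply: (shifted_wedge_perm1 mon_inj e0_least) => i.
  by have := p_neq0 i; rewrite mxE mon_s.
exists (prodExp (fun j => mon t (s j))); first exact: mem_Xi.
rewrite pairing_prodExp; under eq_bigr do rewrite mon_s pairing_add.
by rewrite big_split /= sum_pairing_mon // add0r sumr_const card_ord -mulr_natl natz.
Qed.

Lemma minPair_Xi t g e0 :
  \sum_i g i = 0 -> (d <= t)%N -> expo_deg e0 = d -> f e0 != 0 ->
  (forall e, f e != 0 -> lex_le g e0 e) ->
  minPair g (Xi r d t f) = (size (mons r (t - d)))%:Z * pairing g e0.
Proof.
move=> g0 le_dt deg_e0 fe0 e0_least.
have [m m_Xi m_eq] := Xi_attains g0 le_dt deg_e0 fe0 e0_least.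
apply: minPair_eq m_Xi m_eq _ => m' /(Xi_pairing_ge g0) -> // e fe.
exact/lex_le_pairing/e0_least.
Qed.

Lemma exists_lex_least_support g :
  homog_nonzero d f ->
  exists e0, [/\ expo_deg e0 = d, f e0 != 0 & forall e, f e != 0 -> lex_le g e0 e].
Proof.
case=> homog [e fe]; pose supp := [seq e' <- mons r d | f e' != 0].
have supp_f e' : f e' != 0 -> e' \in supp.
  by move=> fe'; rewrite mem_filter fe' mem_mons (homog e' fe') eqxx.
have [|e0] := exists_lex_min g supp.
  by apply: contraTneq (supp_f e fe) => ->.
rewrite mem_filter mem_mons => /andP[fe0 /eqP deg_e0] e0_least.
by exists e0; split=> // e' /supp_f/e0_least.
Qed.

Lemma minPair_Xi_shift D g :
  homog_nonzero d f -> \sum_i g i = 0 ->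
  minPair g (Xi r d (d + D) f) = (size (mons r D))%:Z * minPair g (Xi r d d f).
Proof.
move=> hf g0; have [e0 [deg_e0 fe0 e0_least]] := exists_lex_least_support g hf.
by rewrite !(minPair_Xi _ _ e0) ?leq_addr // addKn subnn size_mons0 mul1r.
Qed.

End State.

Lemma isDelta_scale (R : rcfType) (k : fieldType) r d t1 t2 (f : expo r -> k) N (v : R) :
  (0 < N)%N ->
  (forall l, in_Gamma l -> minPair l (Xi r d t2 f) = N%:Z * minPair l (Xi r d t1 f)) ->
  isDelta r d t1 f v <-> isDelta r d t2 f (N%:R * v).
Proof.
move=> N_gt0 scale; rewrite -(ltr0n R) in N_gt0.
have ratio l : in_Gamma l ->
    (minPair l (Xi r d t2 f))%:~R / Defs.gnorm R l =
    N%:R * ((minPair l (Xi r d t1 f))%:~R / Defs.gnorm R l).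
  by move=> l_Gamma; rewrite scale // intrM mulrA.
split=> [[[l l_Gamma <-] max_l] | [[l l_Gamma l_eq] max_l]]; split.
- by exists l; rewrite ?ratio.
- by move=> l' l'_Gamma; rewrite ratio // ler_pM2l // max_l.
- by exists l => //; apply: (mulfI (lt0r_neq0 N_gt0)); rewrite -ratio.
- by move=> l' l'_Gamma; rewrite -(ler_pM2l N_gt0) -ratio // max_l.
Qed.

Theorem mainTheorem2 (k : closedFieldType) (r d D : nat) (f : expo r -> k)
    (g : {ffun 'I_r.+1 -> int}) :
  homog_nonzero d f -> in_Gamma g ->
  minPair g (Xi r d (d + D) f) = (size (mons r D))%:Z * minPair g (Xi r d d f) /\
  (forall (R : rcfType) (v : R),
     isDelta r d d f v <-> isDelta r d (d + D) f ((size (mons r D))%:R * v)).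
Proof.
move=> hf /andP[/eqP g0 _]; split; first exact: minPair_Xi_shift.
move=> R v; apply: isDelta_scale; first exact: size_mons_gt0.
by move=> l /andP[/eqP l0 _]; apply: minPair_Xi_shift.
Qed.
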